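(* Let $X$ be a tree of bounded valence, $p$ a transition kernel on $X_0$ with $(X_0,p)$ irreducible and $k\ge0$ with $d(x,y)>k\Rightarrow p(x,y)=0$. Let $\gamma$ be a $p$-admissible path with source $a$ and aim $b$, and let $x\neq y$ be vertices with $a\in\mathcal{B}(x)\setminus\mathcal{B}(y)$ and $b\in\mathcal{B}(y)$; write $[x,y]=(x_0,\dots,x_m)$. Then there exist an integer $0<l\le m$, a tuple $(c_0,\dots,c_l)\in\Xi_{[x,y]}$ with crossing indices $(i_1,\dots,i_l)$, and $p$-admissible paths $\gamma_1,\dots,\gamma_l,\gamma_f$ with $\gamma_s\in\mathcal{P}h(c_{s-1},c_s;\mathcal{B}(x_{i_s})^\complement)$ for $1\le s\le l$ and $\gamma_f\in\mathcal{P}h(c_l,b)$, such that $$\gamma=\gamma_1\ast\cdots\ast\gamma_l\ast\gamma_f.$$ The tuple $(c_0,\dots,c_l)$ and this decomposition are unique with these properties.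
   Context: A $p$-admissible path is $(\omega_0,\dots,\omega_n)$, $n\ge0$, with $p(\omega_{i-1},\omega_i)>0$ for all $i$; source $\omega_0$, aim $\omega_n$. $\mathcal{P}h(a,b)$ is the set of those from $a$ to $b$, and $\mathcal{P}h(a,b;\Omega)$ those whose intermediate vertices $\omega_1,\dots,\omega_{n-1}$ lie in $\Omega$. Concatenation $(\omega_0,\dots,\omega_n)\ast(\omega_n,\omega'_1,\dots,\omega'_{m})=(\omega_0,\dots,\omega_n,\omega'_1,\dots,\omega'_m)$. $\mathcal{B}(w)=\{v:d(w,v)\le k\}$, $\partial\mathcal{B}(w)=\{v:d(w,v)=k+1\}$, $\Xi_w=\{(a,b)\in\partial\mathcal{B}(w)\times\mathcal{B}(w):\mathcal{P}h(a,b;\mathcal{B}(w)^\complement)\ne\emptyset\}$. $\Xi_{[x,y]}$ is the set of tuples $(c_0,\dots,c_l)$, $0<l\le m$, for which there are integers $0<i_1<\dots<i_l\le m$ (the crossing indices, uniquely given by $i_s=1+\max\{i:c_{s-1}\in\mathcal{B}(x_i)\}$) with $c_0\in\mathcal{B}(x)\cap\partial\mathcal{B}(x_{i_1})$, $c_j\in\mathcal{B}(x_{i_j})\cap\partial\mathcal{B}(x_{i_{j+1}})$, $c_l\in\mathcal{B}(x_{i_l})\cap\mathcal{B}(y)$, and $(c_{j-1},c_j)\in\Xi_{x_{i_j}}$. *)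

From Stdlib Require Import Reals Lra Lia List Classical ClassicalEpsilon.
Import ListNotations.
Open Scope R_scope.
Set Implicit Arguments.

Section Graphs.
Variable V : Type.

Fixpoint chain (R : V -> V -> Prop) (w : list V) : Prop :=
  match w with
  | u :: ((v :: _) as t) => R u v /\ chain R t
  | _ => True
  end.

Definition walk (adj : V -> V -> Prop) (x y : V) (n : nat) (w : list V) : Prop :=
  exists t, w = x :: t /\ length t = n /\ chain adj w /\ last w x = y.

Definition simple_graph (adj : V -> V -> Prop) : Prop :=
  (forall u v, adj u v -> adj v u) /\ (forall u, ~ adj u u).

Definition connected (adj : V -> V -> Prop) : Prop :=
  forall x y, exists n w, walk adj x y n w.

Definition has_cycle (adj : V -> V -> Prop) : Prop :=
  exists v0 t, (3 <= length (v0 :: t))%nat /\ NoDup (v0 :: t) /\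
    chain adj (v0 :: t) /\ adj (last t v0) v0.

Definition is_tree (adj : V -> V -> Prop) : Prop :=
  simple_graph adj /\ connected adj /\ ~ has_cycle adj.

Definition bounded_valence (adj : V -> V -> Prop) : Prop :=
  exists N : nat, forall v (s : list V), NoDup s -> Forall (adj v) s -> (length s <= N)%nat.

Definition is_dist (adj : V -> V -> Prop) (x y : V) (n : nat) : Prop :=
  (exists w, walk adj x y n w) /\ (forall m, (m < n)%nat -> forall w, ~ walk adj x y m w).

Definition gdist (adj : V -> V -> Prop) (x y : V) : nat :=
  epsilon (inhabits 0%nat) (fun n => is_dist adj x y n).

Definition geodesic (adj : V -> V -> Prop) (x y : V) (xs : nat -> V) (m : nat) : Prop :=
  xs 0%nat = x /\ xs m = y /\ m = gdist adj x y /\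
  (forall i, (i < m)%nat -> adj (xs i) (xs (S i))).

Definition ball (adj : V -> V -> Prop) (k : nat) (w v : V) : Prop := (gdist adj w v <= k)%nat.
Definition sphere (adj : V -> V -> Prop) (k : nat) (w v : V) : Prop := gdist adj w v = S k.

(** Transition kernel: nonnegative entries, each row sums to 1
    (sum of a nonnegative family = supremum of its finite partial sums). *)
Definition row_sum_one (p : V -> V -> R) (x : V) : Prop :=
  is_lub (fun r => exists s : list V, NoDup s /\ r = fold_right Rplus 0 (map (p x) s)) 1.

Definition transition_kernel (p : V -> V -> R) : Prop :=
  (forall x y, 0 <= p x y) /\ (forall x, row_sum_one p x).

Definition admissible (p : V -> V -> R) (g : list V) : Prop :=
  g <> [] /\ chain (fun u v => 0 < p u v) g.

Definition Ph (p : V -> V -> R) (a b : V) (g : list V) : Prop :=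
  exists t, g = a :: t /\ admissible p g /\ last g a = b.

Definition Ph_in (p : V -> V -> R) (a b : V) (Om : V -> Prop) (g : list V) : Prop :=
  exists t, g = a :: t /\ admissible p g /\ last g a = b /\ Forall Om (removelast t).

Definition irreducible (p : V -> V -> R) : Prop :=
  forall x y, exists g, Ph p x y g.

(** concatenation (w0..wn) * (wn,w'1..w'm) *)
Definition pconcat (g1 g2 : list V) : list V := g1 ++ tl g2.

Definition concat_all (gs : nat -> list V) (l : nat) (gf : list V) : list V :=
  fold_right pconcat gf (map gs (seq 1 l)).

Definition Xi_w (adj : V -> V -> Prop) (p : V -> V -> R) (k : nat) (w a b : V) : Prop :=
  sphere adj k w a /\ ball adj k w b /\
  exists g, Ph_in p a b (fun v => ~ ball adj k w v) g.

Definition in_Xi_geod (adj : V -> V -> Prop) (p : V -> V -> R) (k : nat)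
    (xs : nat -> V) (m : nat) (l : nat) (c : nat -> V) (i : nat -> nat) : Prop :=
  (0 < l <= m)%nat /\
  (0 < i 1%nat)%nat /\ (forall s, (1 <= s < l)%nat -> (i s < i (S s))%nat) /\ (i l <= m)%nat /\
  ball adj k (xs 0%nat) (c 0%nat) /\ sphere adj k (xs (i 1%nat)) (c 0%nat) /\
  (forall j, (1 <= j < l)%nat ->
     ball adj k (xs (i j)) (c j) /\ sphere adj k (xs (i (S j))) (c j)) /\
  ball adj k (xs (i l)) (c l) /\ ball adj k (xs m) (c l) /\
  (forall j, (1 <= j <= l)%nat -> Xi_w adj p k (xs (i j)) (c (pred j)) (c j)).

Definition decomposition (adj : V -> V -> Prop) (p : V -> V -> R) (k : nat)
    (xs : nat -> V) (m : nat) (b : V) (gamma : list V)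
    (l : nat) (c : nat -> V) (i : nat -> nat) (gs : nat -> list V) (gf : list V) : Prop :=
  in_Xi_geod adj p k xs m l c i /\
  (forall s, (1 <= s <= l)%nat ->
     Ph_in p (c (pred s)) (c s) (fun v => ~ ball adj k (xs (i s)) v) (gs s)) /\
  Ph p (c l) b gf /\
  gamma = concat_all gs l gf.

End Graphs.

From Stdlib Require Import Reals Lra List Arith Lia Wf_nat Classical ClassicalEpsilon.
Import ListNotations.
Open Scope R_scope.
Set Implicit Arguments.
Unset Strict Implicit.

(* In a tree, the distance from a vertex [v] to the vertices of a geodesic
   [x_0, ..., x_m] first decreases and then increases by one per step; from the
   first increase on, [v] lies on the [x_(s-1)]-side of every edge [(x_(s-1), x_s)].
   Hence a vertex in [B(x_i)] but outside [B(y)] lies on exactly one sphere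
   [dB(x_s)] with [s > i], and on the [x_(s-1)]-side there.  A [p]-step has length
   at most [k], so the path cannot reach the other side without entering [B(x_s)],
   and it must get there because [b] lies in [B(y)].  Cutting [gamma] at this first
   entrance and repeating from the entry point gives the decomposition; every
   crossing index and every first entrance is forced, whence uniqueness. *)

Section Lists.
Variable V : Type.
Local Open Scope nat_scope.

Lemma last_cons_default (a : V) l d d' : last (a :: l) d = last (a :: l) d'.
Proof. revert a; induction l as [|b l IH]; intros a; [reflexivity|exact (IH b)]. Qed.

Lemma last_nth (l : list V) d : last l d = nth (pred (length l)) l d.
Proof. induction l as [|a [|b l] IH]; [reflexivity|reflexivity|exact IH]. Qed.

Lemma last_app_nonnil (l1 l2 : list V) d : l2 <> [] -> last (l1 ++ l2) d = last l2 d.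
Proof.
  intros H. induction l1 as [|a l1 IH]; [reflexivity|].
  simpl. rewrite <- IH. destruct (l1 ++ l2) eqn:E; [|reflexivity].
  apply app_eq_nil in E. tauto.
Qed.

Lemma last_In (a : V) l d : In (last (a :: l) d) (a :: l).
Proof.
  revert a; induction l as [|b l IH]; intros a; [left; reflexivity|].
  right. exact (IH b).
Qed.

Lemma nth_map_seq (f : nat -> V) a n i d : i < n -> nth i (map f (seq a n)) d = f (a + i).
Proof.
  intros H. rewrite (nth_indep _ _ (f 0)) by (rewrite length_map, length_seq; lia).
  rewrite map_nth, seq_nth by lia. reflexivity.
Qed.

Lemma chain_nth (R : V -> V -> Prop) l d :
  chain R l <-> (forall i, S i < length l -> R (nth i l d) (nth (S i) l d)).
Proof.
  induction l as [|a [|b l] IH].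
  - simpl; split; intros; [lia|exact I].
  - simpl; split; intros; [lia|exact I].
  - split.
    + intros [Hab Hc] [|i] Hi; [exact Hab|].
      apply IH; [exact Hc|simpl in *; lia].
    + intros H. split; [apply (H 0); simpl; lia|].
      apply IH. intros i Hi. apply (H (S i)). simpl in *; lia.
Qed.

Lemma chain_app_inv (R : V -> V -> Prop) l1 l2 :
  chain R (l1 ++ l2) -> chain R l1 /\ chain R l2.
Proof.
  induction l1 as [|a [|b l1] IH]; intros H.
  - split; [exact I|exact H].
  - split; [exact I|]. destruct l2; [exact I|exact (proj2 H)].
  - destruct H as [Hab H]. destruct (IH H). repeat split; assumption.
Qed.

Lemma chain_last_invariant (R : V -> V -> Prop) (I : V -> Prop) a l :
  chain R (a :: l) -> I a -> (forall u v, In u (a :: l) -> R u v -> I u -> I v) ->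
  I (last (a :: l) a).
Proof.
  revert a; induction l as [|b l IH]; intros a Hc Ha Hstep; [exact Ha|].
  destruct Hc as [Hab Hc]. change (I (last (b :: l) a)).
  rewrite (last_cons_default b l a b). apply IH; [exact Hc| |].
  - apply (Hstep a b); [left; reflexivity|exact Hab|exact Ha].
  - intros u v Hu. apply Hstep. right. exact Hu.
Qed.

Lemma first_entrance (P : V -> Prop) l : Exists P l ->
  exists h z r, l = h ++ z :: r /\ Forall (fun v => ~ P v) h /\ P z.
Proof.
  induction l as [|a l IH]; intros H; [inversion H|].
  destruct (classic (P a)) as [Ha|Ha].
  - exists [], a, l. split; [reflexivity|]. split; [constructor|exact Ha].
  - apply Exists_cons in H. destruct H as [H|H]; [contradiction|].
    destruct (IH H) as (h & z & r & -> & Hh & Hz).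
    exists (a :: h), z, r. split; [reflexivity|]. split; [constructor; assumption|exact Hz].
Qed.

Lemma first_entrance_unique (P : V -> Prop) h1 z1 r1 h2 z2 r2 :
  h1 ++ z1 :: r1 = h2 ++ z2 :: r2 ->
  Forall (fun v => ~ P v) h1 -> Forall (fun v => ~ P v) h2 -> P z1 -> P z2 ->
  h1 = h2 /\ z1 = z2 /\ r1 = r2.
Proof.
  revert h2. induction h1 as [|a h1 IH]; intros [|a2 h2] E F1 F2 P1 P2; simpl in E.
  - injection E as -> ->. auto.
  - injection E as -> _. inversion F2; contradiction.
  - injection E as -> _. inversion F1; contradiction.
  - injection E as -> E. inversion F1; inversion F2; subst.
    destruct (IH h2 E) as (-> & -> & ->); auto.
Qed.

End Lists.

Section Naturals.
Local Open Scope nat_scope.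

Lemma last_index_below (P : nat -> Prop) n : P 0 ->
  exists s, s <= n /\ P s /\ forall s', s < s' <= n -> ~ P s'.
Proof.
  intros H0. induction n as [|n IH].
  - exists 0. repeat split; auto. intros; lia.
  - destruct (classic (P (S n))) as [HP|HP].
    + exists (S n). repeat split; auto. intros; lia.
    + destruct IH as (s & Hs & Ps & Hmax). exists s. repeat split; auto.
      intros s' Hs'. destruct (Nat.eq_dec s' (S n)) as [->|]; auto. apply Hmax; lia.
Qed.

Lemma strictly_increasing_gap (i : nat -> nat) l :
  (forall s, 1 <= s < l -> i s < i (S s)) ->
  forall s t, 1 <= s <= t -> t <= l -> i s + (t - s) <= i t.
Proof.
  intros Hinc s t Hst Htl. induction t as [|t IH]; [lia|].
  destruct (Nat.eq_dec s (S t)) as [->|Hne]; [lia|].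
  assert (i t < i (S t)) by (apply Hinc; lia). specialize (IH ltac:(lia) ltac:(lia)). lia.
Qed.

End Naturals.

Section Paths.
Variables (V : Type) (p : V -> V -> R).
Local Open Scope nat_scope.

Lemma concat_all_S (gs : nat -> list V) l gf :
  concat_all gs (S l) gf = pconcat (gs 1) (concat_all (fun n => gs (S n)) l gf).
Proof.
  unfold concat_all. change (seq 1 (S l)) with (1 :: seq 2 l). simpl.
  rewrite <- seq_shift, map_map. reflexivity.
Qed.

Lemma concat_all_ext (gs gs' : nat -> list V) l gf :
  (forall n, 1 <= n <= l -> gs n = gs' n) -> concat_all gs l gf = concat_all gs' l gf.
Proof.
  intros H. unfold concat_all. f_equal. apply map_ext_in.
  intros n Hn. apply in_seq in Hn. apply H. lia.
Qed.

Lemma Ph_cut (Om : V -> Prop) u z b h r :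
  Ph p u b (u :: h ++ z :: r) -> Forall Om h ->
  Ph_in p u z Om (u :: h ++ [z]) /\ Ph p z b (z :: r) /\
  u :: h ++ z :: r = pconcat (u :: h ++ [z]) (z :: r).
Proof.
  intros (t & Et & [_ Hc] & Hlast) Hh. injection Et as <-.
  assert (Eg : u :: h ++ z :: r = (u :: h ++ [z]) ++ r)
    by (simpl; rewrite <- app_assoc; reflexivity).
  split; [|split].
  - exists (h ++ [z]). split; [reflexivity|]. split; [|split].
    + split; [discriminate|]. rewrite Eg in Hc. exact (proj1 (chain_app_inv Hc)).
    + exact (last_last (u :: h) z u).
    + rewrite removelast_last. exact Hh.
  - exists r. split; [reflexivity|]. split.
    + split; [discriminate|].
      change (u :: h ++ z :: r) with ((u :: h) ++ z :: r) in Hc.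
      exact (proj2 (chain_app_inv Hc)).
    + change (u :: h ++ z :: r) with ((u :: h) ++ z :: r) in Hlast.
      rewrite last_app_nonnil in Hlast by discriminate.
      rewrite <- Hlast. apply last_cons_default.
  - exact Eg.
Qed.

Lemma Ph_in_exit (Om : V -> Prop) u z g :
  Ph_in p u z Om g -> Om u -> ~ Om z -> exists h, g = h ++ [z] /\ Forall Om h.
Proof.
  intros (t & -> & _ & Hlast & Hmid) Hu Hz. destruct t as [|a t].
  - simpl in Hlast. subst. contradiction.
  - change (last (a :: t) u = z) in Hlast.
    assert (E := app_removelast_last u (l := a :: t) ltac:(discriminate)). rewrite Hlast in E.
    exists (u :: removelast (a :: t)). split.
    + rewrite E at 1. reflexivity.
    + constructor; assumption.
Qed.

End Paths.

Section Distance.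
Variables (V : Type) (adj : V -> V -> Prop).
Hypothesis adj_sym : forall u v, adj u v -> adj v u.
Hypothesis adj_connected : connected adj.
Local Open Scope nat_scope.
Local Notation D := (gdist adj).

Definition fwalk (x y : V) (n : nat) (f : nat -> V) : Prop :=
  f 0 = x /\ f n = y /\ forall i, i < n -> adj (f i) (f (S i)).

Lemma fwalk_of_walk x y n w : walk adj x y n w -> exists f, fwalk x y n f.
Proof.
  intros (t & -> & Hlen & Hc & Hlast).
  exists (fun i => nth i (x :: t) x). split; [reflexivity|split].
  - rewrite <- Hlast, last_nth. simpl. rewrite Hlen. reflexivity.
  - intros i Hi. apply (proj1 (chain_nth adj (x :: t) x) Hc). simpl; lia.
Qed.

Lemma walk_of_fwalk x y n f : fwalk x y n f -> walk adj x y n (map f (seq 0 (S n))).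
Proof.
  intros (H0 & Hn & Hs). exists (map f (seq 1 n)). split; [|split; [|split]].
  - simpl. rewrite H0. reflexivity.
  - rewrite length_map, length_seq. reflexivity.
  - apply (chain_nth adj _ x). rewrite length_map, length_seq. intros i Hi.
    rewrite !nth_map_seq by lia. apply Hs; lia.
  - rewrite last_nth, length_map, length_seq, nth_map_seq by lia. exact Hn.
Qed.

Lemma gdist_spec x y : is_dist adj x y (D x y).
Proof.
  unfold gdist. apply epsilon_spec.
  destruct (adj_connected x y) as [n Hn].
  destruct (dec_inh_nat_subset_has_unique_least_element
              (fun n => exists w, walk adj x y n w) (fun n => classic _) (ex_intro _ n Hn))
    as (n0 & [Hn0 Hmin] & _).
  exists n0. split; [exact Hn0|]. intros n' Hn' w Hw. specialize (Hmin n' (ex_intro _ w Hw)). lia.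
Qed.

Lemma gdist_fwalk x y : exists f, fwalk x y (D x y) f.
Proof. destruct (gdist_spec x y) as [[w Hw] _]. exact (fwalk_of_walk Hw). Qed.

Lemma gdist_le_fwalk x y n f : fwalk x y n f -> D x y <= n.
Proof.
  intros Hf. destruct (Nat.le_gt_cases (D x y) n) as [|Hlt]; [assumption|].
  exfalso. exact (proj2 (gdist_spec x y) n Hlt _ (walk_of_fwalk Hf)).
Qed.

Lemma gdist_sym x y : D x y = D y x.
Proof.
  assert (H : forall x y, D y x <= D x y).
  { intros u v. destruct (gdist_fwalk u v) as [f (H0 & Hn & Hs)].
    apply (gdist_le_fwalk (f := fun i => f (D u v - i))). split; [|split].
    - rewrite Nat.sub_0_r. exact Hn.
    - rewrite Nat.sub_diag. exact H0.
    - intros i Hi. apply adj_sym. replace (D u v - i) with (S (D u v - S i)) by lia.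
      apply Hs. lia. }
  apply Nat.le_antisymm; apply H.
Qed.

Lemma gdist_eq0 x y : D x y = 0 -> x = y.
Proof.
  intros H. destruct (gdist_fwalk x y) as [f (H0 & Hn & _)]. rewrite H in Hn. congruence.
Qed.

Lemma gdist_triangle x y z : D x z <= D x y + D y z.
Proof.
  destruct (gdist_fwalk x y) as [f (Hf0 & Hfn & Hfs)].
  destruct (gdist_fwalk y z) as [g (Hg0 & Hgn & Hgs)].
  set (n := D x y) in *. set (n' := D y z) in *.
  apply (gdist_le_fwalk (f := fun i => if i <=? n then f i else g (i - n))).
  split; [|split].
  - exact Hf0.
  - destruct (Nat.leb_spec (n + n') n).
    + replace (n + n') with n by lia. rewrite Hfn, <- Hgn, <- Hg0. f_equal. lia.
    + rewrite <- Hgn. f_equal. lia.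
  - intros i Hi. destruct (Nat.leb_spec (S i) n), (Nat.leb_spec i n); try lia.
    + apply Hfs; lia.
    + replace i with n by lia. replace (S n - n) with 1 by lia.
      rewrite Hfn, <- Hg0. apply Hgs. lia.
    + replace (S i - n) with (S (i - n)) by lia. apply Hgs; lia.
Qed.

Lemma gdist_adj x y : adj x y -> D x y <= 1.
Proof.
  intros H. apply (gdist_le_fwalk (f := fun i => match i with 0 => x | _ => y end)).
  split; [reflexivity|split; [reflexivity|]]. intros [|i] Hi; [exact H|lia].
Qed.

Lemma gdist_along_shortest x y f :
  fwalk x y (D x y) f -> forall s, s <= D x y -> D x (f s) = s.
Proof.
  intros (H0 & Hn & Hs) s Hsl. apply Nat.le_antisymm.
  - apply (gdist_le_fwalk (f := f)). split; [exact H0|split; [reflexivity|]].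
    intros; apply Hs; lia.
  - assert (D (f s) y <= D x y - s).
    { apply (gdist_le_fwalk (f := fun i => f (s + i))). split; [|split].
      - f_equal; lia.
      - cbv beta. replace (s + (D x y - s)) with (D x y) by lia. exact Hn.
      - intros i Hi. replace (s + S i) with (S (s + i)) by lia. apply Hs; lia. }
    pose proof (gdist_triangle x (f s) y). lia.
Qed.

Lemma gdist_parent_exists v w e : D v w = S e -> exists u, adj u w /\ D v u = e.
Proof.
  intros E. destruct (gdist_fwalk v w) as [f Hf].
  pose proof (gdist_along_shortest Hf) as Hd. destruct Hf as (_ & Hn & Hs).
  exists (f e). split.
  - rewrite <- Hn, E. apply Hs. lia.
  - apply Hd. lia.
Qed.

Definition geodesic_from (v : V) (P : nat -> V) (e : nat) : Prop :=
  P 0 = v /\ (forall s, s < e -> adj (P s) (P (S s))) /\ (forall s, s <= e -> D v (P s) = s).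

Lemma geodesic_from_to v u : exists P, geodesic_from v P (D v u) /\ P (D v u) = u.
Proof.
  destruct (gdist_fwalk v u) as [P HP]. exists P.
  pose proof (gdist_along_shortest HP) as Hd. destruct HP as (H0 & Hn & Hs).
  repeat split; assumption.
Qed.

Lemma has_cycle_of_fun (cyc : nat -> V) N : 3 <= N ->
  (forall i j, i < N -> j < N -> cyc i = cyc j -> i = j) ->
  (forall i, S i < N -> adj (cyc i) (cyc (S i))) ->
  adj (cyc (pred N)) (cyc 0) -> has_cycle adj.
Proof.
  intros HN Hinj Hs Hl. exists (cyc 0), (map cyc (seq 1 (pred N))).
  assert (E : cyc 0 :: map cyc (seq 1 (pred N)) = map cyc (seq 0 N))
    by (destruct N; [lia|reflexivity]).
  rewrite E. split; [|split; [|split]].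
  - rewrite length_map, length_seq. exact HN.
  - apply (NoDup_nth _ (cyc 0)). rewrite length_map, length_seq. intros i j Hi Hj.
    rewrite !nth_map_seq by lia. apply Hinj; assumption.
  - apply (chain_nth adj _ (cyc 0)). rewrite length_map, length_seq. intros i Hi.
    rewrite !nth_map_seq by lia. apply Hs; lia.
  - clear E. destruct N as [|[|N]]; try lia.
    rewrite last_nth, length_map, length_seq, nth_map_seq by (simpl; lia).
    replace (1 + pred (pred (S (S N)))) with (pred (S (S N))) by (simpl; lia). exact Hl.
Qed.

(* The cycle runs from the last common vertex [P s = Q s] out along [P] to [P e1],
   across the edge to [Q e2], and back along [Q]. *)
Lemma geodesics_meeting_cycle v P Q e1 e2 :
  geodesic_from v P e1 -> geodesic_from v Q e2 -> e1 = e2 \/ e1 = S e2 ->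
  adj (P e1) (Q e2) -> P e2 <> Q e2 -> has_cycle adj.
Proof.
  intros (HP0 & HPs & HPd) (HQ0 & HQs & HQd) He Hadj Hne.
  destruct (@last_index_below (fun s => P s = Q s) e2) as (s & Hs & Hmeet & Hmax); [congruence|].
  assert (Hs2 : s < e2) by (destruct (Nat.eq_dec s e2); [subst; contradiction|lia]).
  assert (Pinj : forall a a', a <= e1 -> a' <= e1 -> P a = P a' -> a = a').
  { intros a a' Ha Ha' E. rewrite <- (HPd a Ha), <- (HPd a' Ha'), E. reflexivity. }
  assert (Qinj : forall a a', a <= e2 -> a' <= e2 -> Q a = Q a' -> a = a').
  { intros a a' Ha Ha' E. rewrite <- (HQd a Ha), <- (HQd a' Ha'), E. reflexivity. }
  assert (PQ : forall a a', s <= a <= e1 -> s < a' <= e2 -> P a <> Q a').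
  { intros a a' Ha Ha' E.
    assert (a = a') as <- by (rewrite <- (HPd a), <- (HQd a') by lia; rewrite E; reflexivity).
    exact (Hmax a ltac:(lia) E). }
  apply (@has_cycle_of_fun
           (fun i => if i <=? e1 - s then P (s + i) else Q (e2 + e1 - s + 1 - i))
           (e1 + e2 - 2 * s + 1)); [lia| | |].
  - intros i j Hi Hj. destruct (Nat.leb_spec i (e1 - s)), (Nat.leb_spec j (e1 - s)); intros E.
    + apply Pinj in E; lia.
    + exfalso. exact (PQ (s + i) (e2 + e1 - s + 1 - j) ltac:(lia) ltac:(lia) E).
    + exfalso. exact (PQ (s + j) (e2 + e1 - s + 1 - i) ltac:(lia) ltac:(lia) (eq_sym E)).
    + apply Qinj in E; lia.
  - intros i Hi. destruct (Nat.leb_spec (S i) (e1 - s)), (Nat.leb_spec i (e1 - s)); try lia.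
    + replace (s + S i) with (S (s + i)) by lia. apply HPs; lia.
    + replace (s + i) with e1 by lia. replace (e2 + e1 - s + 1 - S i) with e2 by lia.
      exact Hadj.
    + replace (e2 + e1 - s + 1 - i) with (S (e2 + e1 - s + 1 - S i)) by lia.
      apply adj_sym, HQs. lia.
  - destruct (Nat.leb_spec (pred (e1 + e2 - 2 * s + 1)) (e1 - s)); [lia|].
    replace (e2 + e1 - s + 1 - pred (e1 + e2 - 2 * s + 1)) with (S s) by lia.
    simpl. rewrite Nat.add_0_r, Hmeet. apply adj_sym, HQs. lia.
Qed.

Section Tree.
Hypothesis adj_irrefl : forall u, ~ adj u u.
Hypothesis acyclic : ~ has_cycle adj.

Lemma gdist_adj_neq v u w : adj u w -> D v u <> D v w.
Proof.
  intros Huw E. destruct (geodesic_from_to v u) as (P & HP & Pu).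
  destruct (geodesic_from_to v w) as (Q & HQ & Qw). rewrite E in HP, Pu.
  apply acyclic, (geodesics_meeting_cycle HP HQ (or_introl eq_refl)); rewrite Pu, Qw.
  - exact Huw.
  - intros ->. exact (adj_irrefl Huw).
Qed.

Lemma gdist_adj_succ v u w : adj u w -> D v w = S (D v u) \/ D v u = S (D v w).
Proof.
  intros H. pose proof (gdist_triangle v u w). pose proof (gdist_triangle v w u).
  pose proof (gdist_adj H). pose proof (gdist_adj (adj_sym H)).
  pose proof (gdist_adj_neq (v := v) H).
  lia.
Qed.

Lemma gdist_parent_unique v u1 u2 w :
  adj u1 w -> adj u2 w -> D v u1 = D v u2 -> D v w = S (D v u1) -> u1 = u2.
Proof.
  intros H1 H2 E Ew. apply NNPP. intros Hne.
  destruct (geodesic_from_to v u1) as (P & (HP0 & HPs & HPd) & Pu).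
  destruct (geodesic_from_to v u2) as (Q & HQ & Qu). rewrite <- E in HQ, Qu.
  set (e := D v u1) in *.
  apply acyclic, (@geodesics_meeting_cycle v (fun s => if s <=? e then P s else w) Q (S e) e);
    [split; [|split]|exact HQ|right; reflexivity| |].
  - exact HP0.
  - intros s Hs. destruct (Nat.leb_spec (S s) e), (Nat.leb_spec s e); try lia.
    + apply HPs; lia.
    + replace s with e by lia. rewrite Pu. exact H1.
  - intros s Hs. destruct (Nat.leb_spec s e); [apply HPd; lia|].
    replace s with (S e) by lia. exact Ew.
  - destruct (Nat.leb_spec (S e) e); [lia|]. rewrite Qu. exact (adj_sym H2).
  - rewrite Nat.leb_refl, Pu, Qu. exact Hne.
Qed.

(** [side L c v]: [v] lies on the [L]-side of the edge [{L, c}]. *)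
Definition side (L c v : V) : Prop := D c v = S (D L v).

(* Comparing the parents of [w] seen from [L] and from [c] shows that the side
   can only change across the edge [{L, c}] itself. *)
Lemma side_exit_edge L c w w' :
  adj L c -> adj w w' -> side L c w -> ~ side L c w' -> w = L /\ w' = c.
Proof.
  unfold side. intros HLc Hww E Hn.
  assert (A1 := gdist_adj_succ w' HLc). rewrite !(gdist_sym w') in A1.
  assert (A2 := gdist_adj_succ c Hww). assert (A3 := gdist_adj_succ L Hww).
  assert (Hc' : D c w' = D L w) by lia. assert (HL' : D L w' = S (D L w)) by lia.
  destruct (D L w) as [|e] eqn:Ee.
  - apply gdist_eq0 in Ee. apply gdist_eq0 in Hc'. split; congruence.
  - destruct (gdist_parent_exists Ee) as (u & Hu & Du).
    assert (B1 := gdist_triangle c L u). assert (B2 := gdist_adj (adj_sym HLc)).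
    assert (B3 := gdist_adj_succ c Hu).
    assert (Hcu : D c u = S e) by lia.
    assert (u = w') as -> by (apply (gdist_parent_unique (v := c) Hu (adj_sym Hww)); lia).
    lia.
Qed.

Lemma fwalk_leaving_side L c u v n f :
  adj L c -> fwalk u v n f -> side L c u -> ~ side L c v -> exists t, t <= n /\ f t = c.
Proof.
  intros HLc (H0 & Hn & Hs) Hu Hv.
  assert (G : forall t, t <= n -> side L c (f t) \/ exists t', t' <= t /\ f t' = c).
  { induction t as [|t IH]; intros Ht; [left; rewrite H0; exact Hu|].
    destruct IH as [IH|(t' & Ht' & Et')]; [lia| |right; exists t'; split; [lia|exact Et']].
    destruct (classic (side L c (f (S t)))) as [E|E]; [left; exact E|].
    right. exists (S t). split; [lia|]. exact (proj2 (side_exit_edge HLc (Hs t ltac:(lia)) IH E)). }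
  destruct (G n (le_n n)) as [E|(t & Ht & Et)]; [rewrite Hn in E; contradiction|eauto].
Qed.

Lemma side_short_jump k L c u v :
  adj L c -> D u v <= k -> k < D c u -> side L c u -> side L c v.
Proof.
  intros HLc Huv Hcu Hu. apply NNPP. intros Hv.
  destruct (gdist_fwalk u v) as [f Hf]. pose proof (gdist_along_shortest Hf) as Hd.
  destruct (fwalk_leaving_side HLc Hf Hu Hv) as (t & Ht & Et).
  specialize (Hd t Ht). rewrite Et, gdist_sym in Hd. lia.
Qed.

Lemma sphere_not_ball k w v : sphere adj k w v -> ~ ball adj k w v.
Proof. unfold sphere, ball. lia. Qed.

Section Geodesic.
Variables (k : nat) (xs : nat -> V) (m : nat).
Hypothesis xs_adj : forall t, t < m -> adj (xs t) (xs (S t)).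
Hypothesis xs_shortest : m = D (xs 0) (xs m).

Lemma geodesic_no_backtrack t : S (S t) <= m -> xs (S (S t)) <> xs t.
Proof.
  intros Ht E.
  assert (D (xs 0) (xs m) <= m - 2); [|lia].
  apply (gdist_le_fwalk (f := fun i => if i <=? t then xs i else xs (i + 2))).
  split; [reflexivity|split]; cbv beta.
  - destruct (Nat.leb_spec (m - 2) t).
    + replace (m - 2) with t by lia. rewrite <- E. f_equal. lia.
    + f_equal. lia.
  - intros i Hi. destruct (Nat.leb_spec (S i) t), (Nat.leb_spec i t); try lia.
    + apply xs_adj; lia.
    + replace i with t by lia. rewrite <- E. replace (S t + 2) with (S (S (S t))) by lia.
      apply xs_adj; lia.
    + replace (S i + 2) with (S (i + 2)) by lia. apply xs_adj; lia.
Qed.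

Lemma side_geodesic_step v t : t < m -> side (xs t) (xs (S t)) v \/ side (xs (S t)) (xs t) v.
Proof. intros Ht. unfold side. rewrite !(gdist_sym _ v). apply gdist_adj_succ, xs_adj, Ht. Qed.

(* Otherwise [xs t] and [xs (S (S t))] would both be the parent of [xs (S t)] seen from [v]. *)
Lemma side_geodesic_succ v t :
  S (S t) <= m -> side (xs t) (xs (S t)) v -> side (xs (S t)) (xs (S (S t))) v.
Proof.
  intros Ht E. destruct (side_geodesic_step v (t := S t) ltac:(lia)) as [|E2]; [assumption|].
  exfalso. apply (geodesic_no_backtrack Ht).
  unfold side in *. rewrite !(gdist_sym _ v) in *.
  apply (gdist_parent_unique (v := v) (adj_sym (xs_adj (t := S t) ltac:(lia)))
           (xs_adj (t := t) ltac:(lia)));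
    lia.
Qed.

Lemma side_geodesic_far v t j : 1 <= t <= j -> j <= m -> side (xs (pred t)) (xs t) v ->
  D (xs j) v = D (xs t) v + (j - t).
Proof.
  intros Htj Hj Ht. replace j with (t + (j - t)) at 1 by lia.
  assert (Hd : t + (j - t) <= m) by lia. revert Hd. generalize (j - t) as d.
  enough (G : forall d, t + d <= m ->
             D (xs (t + d)) v = D (xs t) v + d /\ side (xs (pred (t + d))) (xs (t + d)) v)
    by (intros d Hd; exact (proj1 (G d Hd))).
  induction d as [|d IH]; intros Hd.
  - rewrite !Nat.add_0_r. split; [reflexivity|exact Ht].
  - destruct IH as [IH1 IH2]; [lia|].
    assert (Hs := side_geodesic_succ (v := v) (t := pred (t + d)) ltac:(lia)).
    replace (S (pred (t + d))) with (t + d) in Hs by lia.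
    replace (t + S d) with (S (t + d)) by lia. specialize (Hs IH2).
    split; [unfold side in Hs; lia|exact Hs].
Qed.

Lemma gdist_geodesic_dichotomy v i t : i <= t <= m ->
  D (xs t) v <= D (xs i) v \/ (i < t /\ side (xs (pred t)) (xs t) v).
Proof.
  intros Ht. replace t with (i + (t - i)) by lia.
  assert (Hd : i + (t - i) <= m) by lia. revert Hd. generalize (t - i) as d.
  induction d as [|d IH]; intros Hd; [left; rewrite Nat.add_0_r; lia|].
  replace (i + S d) with (S (i + d)) by lia.
  destruct (side_geodesic_step v (t := i + d) ltac:(lia)) as [E|E].
  - right. split; [lia|exact E].
  - destruct IH as [IH|[Hlt IH]]; [lia|left; unfold side in E; lia|].
    exfalso. assert (Hs := side_geodesic_succ (v := v) (t := pred (i + d)) ltac:(lia)).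
    replace (S (pred (i + d))) with (i + d) in Hs by lia.
    unfold side in *. specialize (Hs IH). lia.
Qed.

Lemma ball_geodesic_convex v i t j : i <= t <= j -> j <= m ->
  ball adj k (xs i) v -> ball adj k (xs j) v -> ball adj k (xs t) v.
Proof.
  unfold ball. intros Ht Hj Hi Hjk.
  destruct (gdist_geodesic_dichotomy v (i := i) (t := t)) as [H|[H1 H2]]; [lia|lia|].
  assert (E := side_geodesic_far (t := t) (j := j) ltac:(lia) Hj H2). lia.
Qed.

Lemma sphere_geodesic_side v i s : i < s <= m ->
  ball adj k (xs i) v -> sphere adj k (xs s) v -> side (xs (pred s)) (xs s) v.
Proof.
  unfold ball, sphere. intros Hs Hi E.
  destruct (gdist_geodesic_dichotomy v (i := i) (t := s)) as [H|[_ H]]; [lia|lia|exact H].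
Qed.

Lemma sphere_geodesic_unique v i s1 s2 : i < s1 <= m -> i < s2 <= m ->
  ball adj k (xs i) v -> sphere adj k (xs s1) v -> sphere adj k (xs s2) v -> s1 = s2.
Proof.
  assert (Hlt : forall a b, i < a -> a < b <= m -> ball adj k (xs i) v ->
                  sphere adj k (xs a) v -> sphere adj k (xs b) v -> False).
  { intros a b Ha Hb Hi Ea Eb.
    assert (E := side_geodesic_far (t := a) (j := b) ltac:(lia) ltac:(lia)
                   (sphere_geodesic_side (i := i) (s := a) ltac:(lia) Hi Ea)).
    unfold sphere in *. lia. }
  intros H1 H2 Hi E1 E2. destruct (Nat.lt_total s1 s2) as [H|[H|H]]; [|exact H|]; exfalso.
  - exact (Hlt s1 s2 ltac:(lia) ltac:(lia) Hi E1 E2).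
  - exact (Hlt s2 s1 ltac:(lia) ltac:(lia) Hi E2 E1).
Qed.

Lemma sphere_geodesic_exists v i : i <= m ->
  ball adj k (xs i) v -> ~ ball adj k (xs m) v -> exists s, i < s <= m /\ sphere adj k (xs s) v.
Proof.
  unfold ball, sphere. intros Him Hi Hm.
  enough (G : forall d, i + d <= m -> k < D (xs (i + d)) v ->
                exists s, i < s <= i + d /\ D (xs s) v = S k).
  { destruct (G (m - i)) as (s & Hs & Es); [lia|replace (i + (m - i)) with m by lia; lia|].
    exists s. split; [lia|exact Es]. }
  induction d as [|d IH]; intros Hd Hk; [rewrite Nat.add_0_r in Hk; lia|].
  destruct (Nat.le_gt_cases (D (xs (i + d)) v) k) as [Hin|Hout].
  - exists (i + S d). split; [lia|].
    destruct (side_geodesic_step v (t := i + d) ltac:(lia)) as [E|E];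
      unfold side in E; replace (i + S d) with (S (i + d)) in * by lia; lia.
  - destruct (IH ltac:(lia) Hout) as (s & Hs & Es). exists s. split; [lia|exact Es].
Qed.

Lemma side_geodesic_outside v s : 1 <= s <= m ->
  side (xs (pred s)) (xs s) v -> ~ ball adj k (xs s) v -> ~ ball adj k (xs m) v.
Proof.
  unfold ball. intros Hs Hside Hout.
  assert (E := side_geodesic_far (t := s) (j := m) ltac:(lia) (le_n m) Hside). lia.
Qed.

Section Decomposition.
Variables (p : V -> V -> R) (b : V).
Hypothesis p_range : forall u v, (gdist adj u v > k)%nat -> p u v = 0%R.
Hypothesis b_end : ball adj k (xs m) b.

Local Notation outside s := (fun v => ~ ball adj k (xs s) v).

Lemma p_step_short u v : (0 < p u v)%R -> D u v <= k.
Proof.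
  intros H. destruct (Nat.le_gt_cases (D u v) k) as [|Hgt]; [assumption|].
  rewrite (p_range Hgt) in H. lra.
Qed.

(* Steps of length at most [k] cannot cross from the [xs (pred s)]-side of the
   geodesic edge into the [xs s]-side without entering [B(xs s)], and [b] is not
   on that side outside [B(xs s)]. *)
Lemma path_enters_ball s w t : 1 <= s <= m ->
  chain (fun u v => 0 < p u v)%R (w :: t) -> last (w :: t) w = b ->
  ~ ball adj k (xs s) w -> side (xs (pred s)) (xs s) w ->
  exists h z r, t = h ++ z :: r /\ Forall (outside s) h /\ ball adj k (xs s) z.
Proof.
  intros Hs Hc Hlast Hw Hside. apply first_entrance, NNPP. intros Hnone.
  apply Forall_Exists_neg in Hnone.
  assert (Hall : Forall (outside s) (w :: t)) by (constructor; assumption).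
  assert (Hedge : adj (xs (pred s)) (xs s))
    by (replace s with (S (pred s)) at 2 by lia; apply xs_adj; lia).
  assert (Hb : side (xs (pred s)) (xs s) b).
  { rewrite <- Hlast. apply (chain_last_invariant Hc Hside).
    intros u v Hu Huv. apply (side_short_jump Hedge (p_step_short Huv)).
    apply (proj1 (Forall_forall _ _) Hall) in Hu. unfold ball in Hu. lia. }
  apply (side_geodesic_outside (s := s) Hs Hb); [|exact b_end].
  rewrite <- Hlast. exact (proj1 (Forall_forall _ _) Hall _ (last_In w t w)).
Qed.

(* [decomposition] generalized to start in [B(xs i0)] and to allow no crossing
   at all ([l = 0]); [i 0] and [gs 0] are irrelevant. *)
Record decomp_from (i0 : nat) (g : list V) (l : nat) (c : nat -> V) (i : nat -> nat)
    (gs : nat -> list V) (gf : list V) : Prop := {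
  dec_range : forall s, 1 <= s <= l -> i0 < i s <= m;
  dec_incr : forall s, 1 <= s < l -> i s < i (S s);
  dec_start : ball adj k (xs i0) (c 0);
  dec_sphere : forall s, 1 <= s <= l -> sphere adj k (xs (i s)) (c (pred s));
  dec_ball : forall s, 1 <= s <= l -> ball adj k (xs (i s)) (c s);
  dec_end : ball adj k (xs m) (c l);
  dec_piece : forall s, 1 <= s <= l -> Ph_in p (c (pred s)) (c s) (outside (i s)) (gs s);
  dec_final : Ph p (c l) b gf;
  dec_concat : g = concat_all gs l gf }.

Lemma decomp_head i0 g l c i gs gf : decomp_from i0 g l c i gs gf -> exists t, g = c 0 :: t.
Proof.
  intros Hd. rewrite (dec_concat Hd). destruct l as [|l].
  - destruct (dec_final Hd) as (t & Et & _). exists t. exact Et.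
  - rewrite concat_all_S. destruct (dec_piece Hd (s := 1) ltac:(lia)) as (t & Et & _).
    rewrite Et. eexists. reflexivity.
Qed.

Lemma decomp_start_unique i0 g l c i gs gf l' c' i' gs' gf' :
  decomp_from i0 g l c i gs gf -> decomp_from i0 g l' c' i' gs' gf' -> c' 0 = c 0.
Proof.
  intros Hd Hd'. destruct (decomp_head Hd) as [t E]. destruct (decomp_head Hd') as [t' E'].
  rewrite E in E'. injection E' as ->. reflexivity.
Qed.

Lemma decomp_nil i0 z g i gs :
  ball adj k (xs i0) z -> ball adj k (xs m) z -> Ph p z b g ->
  decomp_from i0 g 0 (fun _ => z) i gs g.
Proof. intros Hz Hzm Hg. split; (intros; lia) || assumption || reflexivity. Qed.

Lemma decomp_cons i0 s u g1 g l c i gs gf :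
  decomp_from s g l c i gs gf -> i0 < s <= m ->
  ball adj k (xs i0) u -> sphere adj k (xs s) u -> Ph_in p u (c 0) (outside s) g1 ->
  decomp_from i0 (pconcat g1 g) (S l) (fun n => match n with 0 => u | S j => c j end)
    (fun n => match n with 0 | 1 => s | S j => i j end)
    (fun n => match n with 0 | 1 => g1 | S j => gs j end) gf.
Proof.
  intros Hd Hs Hu Hsph Hg1. split.
  - intros [|[|j]] Hj; [lia|lia|]. destruct (dec_range Hd (s := S j) ltac:(lia)). lia.
  - intros [|[|j]] Hj; [lia| |].
    + exact (proj1 (dec_range Hd (s := 1) ltac:(lia))).
    + apply (dec_incr Hd). lia.
  - exact Hu.
  - intros [|[|j]] Hj; [lia|exact Hsph|]. exact (dec_sphere Hd (s := S j) ltac:(lia)).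
  - intros [|[|j]] Hj; [lia|exact (dec_start Hd)|]. exact (dec_ball Hd (s := S j) ltac:(lia)).
  - exact (dec_end Hd).
  - intros [|[|j]] Hj; [lia|exact Hg1|]. exact (dec_piece Hd (s := S j) ltac:(lia)).
  - exact (dec_final Hd).
  - rewrite concat_all_S, (dec_concat Hd). f_equal.
    apply concat_all_ext. intros [|n] Hn; [lia|reflexivity].
Qed.

Lemma decomp_uncons i0 g l c i gs gf : decomp_from i0 g (S l) c i gs gf ->
  g = pconcat (gs 1) (concat_all (fun n => gs (S n)) l gf) /\
  decomp_from (i 1) (concat_all (fun n => gs (S n)) l gf) l
    (fun n => c (S n)) (fun n => i (S n)) (fun n => gs (S n)) gf.
Proof.
  intros Hd. split; [rewrite (dec_concat Hd), concat_all_S; reflexivity|].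
  assert (Hgap := strictly_increasing_gap (dec_incr Hd)). split.
  - intros s' Hs'. specialize (Hgap 1 (S s') ltac:(lia) ltac:(lia)).
    destruct (dec_range Hd (s := S s') ltac:(lia)). lia.
  - intros s' Hs'. apply (dec_incr Hd). lia.
  - exact (dec_ball Hd (s := 1) ltac:(lia)).
  - intros s' Hs'. replace (S (pred s')) with s' by lia.
    exact (dec_sphere Hd (s := S s') ltac:(lia)).
  - intros s' Hs'. exact (dec_ball Hd (s := S s') ltac:(lia)).
  - exact (dec_end Hd).
  - intros s' Hs'. replace (S (pred s')) with s' by lia.
    exact (dec_piece Hd (s := S s') ltac:(lia)).
  - exact (dec_final Hd).
  - reflexivity.
Qed.

(* Cut the path at its first entrance into the ball of the first sphere crossing,
   and recurse on the (shorter) remainder. *)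
Lemma decomp_exists n : forall g u i0, length g <= n -> i0 <= m ->
  Ph p u b g -> ball adj k (xs i0) u -> exists l c i gs gf, decomp_from i0 g l c i gs gf.
Proof.
  induction n as [|n IH]; intros g u i0 Hlen Hi0 Hg Hu.
  { destruct Hg as (t & -> & _). simpl in Hlen. lia. }
  destruct (classic (ball adj k (xs m) u)) as [Hend|Hend].
  { exists 0, (fun _ => u), (fun _ => 0), (fun _ => g), g. apply decomp_nil; assumption. }
  destruct (sphere_geodesic_exists Hi0 Hu Hend) as (s & Hs & Hsph).
  pose proof Hg as (t & -> & [_ Hc] & Hlast).
  destruct (path_enters_ball (s := s) ltac:(lia) Hc Hlast (sphere_not_ball Hsph)
              (sphere_geodesic_side (i := i0) Hs Hu Hsph)) as (h & z & r & -> & Hh & Hz).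
  destruct (Ph_cut Hg Hh) as (Hpiece & Hrest & ->).
  destruct (IH (z :: r) z s) as (l & c & i & gs & gf & Hd);
    [simpl in *; rewrite length_app in Hlen; simpl in Hlen; lia|lia|exact Hrest|exact Hz|].
  assert (Hz0 : c 0 = z) by (destruct (decomp_head Hd) as [t' E]; injection E; auto).
  subst z.
  do 5 eexists. exact (decomp_cons Hd Hs Hu Hsph Hpiece).
Qed.

Lemma decomp_no_crossing i0 g l c i gs gf :
  decomp_from i0 g l c i gs gf -> ball adj k (xs m) (c 0) -> l = 0.
Proof.
  intros Hd Hend. destruct l as [|l]; [reflexivity|exfalso].
  apply (sphere_not_ball (dec_sphere Hd (s := 1) ltac:(lia))).
  apply (ball_geodesic_convex (i := i0) (j := m)); [|lia|exact (dec_start Hd)|exact Hend].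
  pose proof (dec_range Hd (s := 1) ltac:(lia)). lia.
Qed.

(* The first crossing index is forced by the start, and the first piece is the
   initial segment of [g] up to its first entrance into the ball of that index. *)
Lemma decomp_first_piece_unique i0 g l c i gs gf l' c' i' gs' gf' :
  decomp_from i0 g (S l) c i gs gf -> decomp_from i0 g (S l') c' i' gs' gf' ->
  i' 1 = i 1 /\ c' 1 = c 1 /\ gs' 1 = gs 1 /\
  concat_all (fun n => gs' (S n)) l' gf' = concat_all (fun n => gs (S n)) l gf.
Proof.
  intros Hd Hd'. assert (Hc0 := decomp_start_unique Hd Hd').
  assert (Hi1 : i' 1 = i 1).
  { apply (sphere_geodesic_unique (i := i0) (v := c 0)).
    - exact (dec_range Hd' (s := 1) ltac:(lia)).
    - exact (dec_range Hd (s := 1) ltac:(lia)).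
    - exact (dec_start Hd).
    - rewrite <- Hc0. exact (dec_sphere Hd' (s := 1) ltac:(lia)).
    - exact (dec_sphere Hd (s := 1) ltac:(lia)). }
  destruct (decomp_uncons Hd) as (Eg & Hrest). destruct (decomp_uncons Hd') as (Eg' & Hrest').
  assert (Hb1 := dec_ball Hd (s := 1) ltac:(lia)).
  assert (Hb1' := dec_ball Hd' (s := 1) ltac:(lia)). rewrite Hi1 in Hb1'.
  destruct (Ph_in_exit (dec_piece Hd (s := 1) ltac:(lia))) as (h & Eh & Fh);
    [exact (sphere_not_ball (dec_sphere Hd (s := 1) ltac:(lia)))|intros H; exact (H Hb1)|].
  destruct (Ph_in_exit (dec_piece Hd' (s := 1) ltac:(lia))) as (h' & Eh' & Fh');
    [cbv beta; simpl pred; rewrite Hi1, Hc0;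
     exact (sphere_not_ball (dec_sphere Hd (s := 1) ltac:(lia)))
    |intros H; rewrite Hi1 in H; exact (H Hb1')|].
  rewrite Hi1 in Fh'.
  rewrite Eg' in Eg. unfold pconcat in Eg. rewrite Eh, Eh', <- !app_assoc in Eg. simpl in Eg.
  destruct (first_entrance_unique (eq_sym Eg) Fh Fh' Hb1 Hb1') as (<- & Hc1 & Htl).
  destruct (decomp_head Hrest) as [t E]. destruct (decomp_head Hrest') as [t' E'].
  rewrite E, E' in Htl |- *. simpl in Htl. subst.
  repeat split; congruence.
Qed.

Lemma decomp_unique l : forall i0 g c i gs gf l' c' i' gs' gf',
  decomp_from i0 g l c i gs gf -> decomp_from i0 g l' c' i' gs' gf' ->
  l' = l /\ (forall j, j <= l -> c' j = c j) /\
  (forall s, 1 <= s <= l -> gs' s = gs s) /\ gf' = gf.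
Proof.
  induction l as [|l IH]; intros i0 g c i gs gf l' c' i' gs' gf' Hd Hd';
    assert (Hc0 := decomp_start_unique Hd Hd').
  - assert (l' = 0) as -> by (apply (decomp_no_crossing Hd'); rewrite Hc0; exact (dec_end Hd)).
    split; [reflexivity|split; [|split]].
    + intros j Hj. replace j with 0 by lia. exact Hc0.
    + intros; lia.
    + exact (eq_trans (eq_sym (dec_concat Hd')) (dec_concat Hd)).
  - destruct l' as [|l'].
    { assert (S l = 0) by (apply (decomp_no_crossing Hd); rewrite <- Hc0; exact (dec_end Hd')).
      discriminate. }
    destruct (decomp_first_piece_unique Hd Hd') as (Hi1 & Hc1 & Hgs1 & Hrest).
    destruct (decomp_uncons Hd) as (_ & Htail). destruct (decomp_uncons Hd') as (_ & Htail').
    rewrite Hi1, Hrest in Htail'.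
    destruct (IH _ _ _ _ _ _ _ _ _ _ _ Htail Htail') as (-> & Hc & Hgs & Hgf).
    split; [reflexivity|split; [|split; [|exact Hgf]]].
    + intros [|j] Hj; [exact Hc0|]. apply Hc. lia.
    + intros [|[|s]] Hs; [lia|exact Hgs1|]. apply (Hgs (S s)). lia.
Qed.

Lemma decomposition_of_decomp_from g l c i gs gf : 1 <= l ->
  decomp_from 0 g l c i gs gf -> decomposition adj p k xs m b g l c i gs gf.
Proof.
  intros Hl Hd. assert (Hgap := strictly_increasing_gap (dec_incr Hd)).
  assert (H1 := dec_range Hd (s := 1) ltac:(lia)).
  assert (Hlast := dec_range Hd (s := l) ltac:(lia)).
  specialize (Hgap 1 l ltac:(lia) ltac:(lia)).
  split; [|split; [|split]].
  - split; [lia|]. split; [lia|]. split; [exact (dec_incr Hd)|]. split; [lia|].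
    split; [exact (dec_start Hd)|]. split; [exact (dec_sphere Hd (s := 1) ltac:(lia))|].
    split.
    { intros j Hj. split; [exact (dec_ball Hd (s := j) ltac:(lia))|].
      exact (dec_sphere Hd (s := S j) ltac:(lia)). }
    split; [exact (dec_ball Hd (s := l) ltac:(lia))|]. split; [exact (dec_end Hd)|].
    intros j Hj. split; [exact (dec_sphere Hd (s := j) Hj)|].
    split; [exact (dec_ball Hd (s := j) Hj)|]. eexists. exact (dec_piece Hd (s := j) Hj).
  - exact (dec_piece Hd).
  - exact (dec_final Hd).
  - exact (dec_concat Hd).
Qed.

Lemma decomp_from_of_decomposition g l c i gs gf :
  decomposition adj p k xs m b g l c i gs gf -> decomp_from 0 g l c i gs gf.
Proof.
  intros ((Hl & H1 & Hinc & Him & Hstart & Hsph1 & Hmid & Hball & Hend & _) & Hpiece & Hf & Hg).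
  assert (Hgap := strictly_increasing_gap Hinc).
  split; try assumption.
  - intros s Hs. pose proof (Hgap 1 s ltac:(lia) ltac:(lia)).
    pose proof (Hgap s l ltac:(lia) ltac:(lia)). lia.
  - intros [|[|s]] Hs; [lia|exact Hsph1|]. exact (proj2 (Hmid (S s) ltac:(lia))).
  - intros s Hs. destruct (Nat.eq_dec s l) as [->|]; [exact Hball|]. apply Hmid. lia.
Qed.

Lemma decomposition_exists_unique a gamma :
  Ph p a b gamma -> ball adj k (xs 0) a -> ~ ball adj k (xs m) a ->
  exists l c i gs gf, decomposition adj p k xs m b gamma l c i gs gf /\
    (forall l' c' i' gs' gf', decomposition adj p k xs m b gamma l' c' i' gs' gf' ->
       l' = l /\ (forall j, j <= l -> c' j = c j) /\
       (forall s, 1 <= s <= l -> gs' s = gs s) /\ gf' = gf).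
Proof.
  intros Hgamma Ha Ha_end.
  destruct (decomp_exists (le_n _) (Nat.le_0_l m) Hgamma Ha) as (l & c & i & gs & gf & Hd).
  assert (Hc0 : c 0 = a) by (destruct (decomp_head Hd) as [t E];
                             destruct Hgamma as (t' & E' & _); rewrite E' in E; injection E; auto).
  assert (Hl : 1 <= l).
  { destruct l; [|lia]. exfalso. apply Ha_end. rewrite <- Hc0. exact (dec_end Hd). }
  exists l, c, i, gs, gf. split; [exact (decomposition_of_decomp_from Hl Hd)|].
  intros l' c' i' gs' gf' Hd'. exact (decomp_unique Hd (decomp_from_of_decomposition Hd')).
Qed.

End Decomposition.
End Geodesic.
End Tree.
End Distance.

Theorem proposition3p20 (V : Type) (adj : V -> V -> Prop) (p : V -> V -> R) (k : nat)
  (Htree : is_tree adj) (Hval : bounded_valence adj)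
  (Hker : transition_kernel p) (Hirr : irreducible p)
  (Hrange : forall u v, (gdist adj u v > k)%nat -> p u v = 0)
  (a b : V) (gamma : list V) (Hgamma : Ph p a b gamma)
  (x y : V) (Hxy : x <> y)
  (Ha : ball adj k x a /\ ~ ball adj k y a) (Hb : ball adj k y b)
  (xs : nat -> V) (m : nat) (Hgeod : geodesic adj x y xs m) :
  exists (l : nat) (c : nat -> V) (i : nat -> nat) (gs : nat -> list V) (gf : list V),
    decomposition adj p k xs m b gamma l c i gs gf /\
    (forall (l' : nat) (c' : nat -> V) (i' : nat -> nat) (gs' : nat -> list V) (gf' : list V),
       decomposition adj p k xs m b gamma l' c' i' gs' gf' ->
       l' = l /\ (forall j, (j <= l)%nat -> c' j = c j) /\
       (forall s, (1 <= s <= l)%nat -> gs' s = gs s) /\ gf' = gf).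
Proof.
  destruct Htree as ((Hsym & Hirrefl) & Hconn & Hacyclic).
  destruct Hgeod as (<- & <- & Hm & Hxs).
  exact (decomposition_exists_unique Hsym Hconn Hirrefl Hacyclic Hxs Hm Hrange Hb
           Hgamma (proj1 Ha) (proj2 Ha)).
Qed.
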